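(* In the standing setting, for every $A'\in Q'$ we have $g(g'(A'))=A'$.
   Context: Standing setting: $(P,\preceq)$ is a finite poset with a bottom and a top element; $f:P\to P'$ is a surjective map onto $P'=f(P)$; $f^{-1}(a')=\{a\in P: f(a)=a'\}$; the relation $\preceq'$ on $P'$ is defined by $b'\preceq' a'$ iff there exist $a\in f^{-1}(a')$, $b\in f^{-1}(b')$ with $b\preceq a$. Assume the three conditions: (D) for all $a',b'\in P'$ with $b'\preceq' a'$ and every $a\in f^{-1}(a')$ there is $b\in f^{-1}(b')$ with $b\preceq a$; (U) for all $a',b'\in P'$ with $b'\preceq' a'$ and every $b\in f^{-1}(b')$ there is $a\in f^{-1}(a')$ with $b\preceq a$; (S) for all $a,b,c\in P$, if $c\preceq b\preceq a$ and $f(c)=f(a)$ then $f(b)=f(a)$. (Then $(P',\preceq')$ is a poset.) A down-set of a poset is a subset $A$ such that $a\in A$ and $b\preceq a$ imply $b\in A$. $Q$ is the set of nonempty down-sets of $(P,\preceq)$ and $Q'$ the set of nonempty down-sets of $(P',\preceq')$, each ordered by inclusion. $g:2^P\to 2^{P'}$ is $g(A)=\{f(a):a\in A\}$. For $A'\in Q'$, $g^{-1}(A')=\{A\in Q: g(A)=A'\}$ and $g'(A')=\bigcup_{A\in g^{-1}(A')}A$. *)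

From mathcomp Require Import all_boot.
Set Implicit Arguments. Unset Strict Implicit. Unset Printing Implicit Defensive.

Definition is_poset (T : finType) (le : rel T) : Prop :=
  [/\ reflexive le, antisymmetric le & transitive le].

Definition has_bottom (T : finType) (le : rel T) : Prop :=
  exists b : T, forall a, le b a.
Definition has_top (T : finType) (le : rel T) : Prop :=
  exists t : T, forall a, le a t.

Definition induced_le (T T' : finType) (le : rel T) (f : T -> T') : rel T' :=
  fun b' a' => [exists a, exists b, [&& f a == a', f b == b' & le b a]].

Definition condD (T T' : finType) (le : rel T) (f : T -> T') : Prop :=
  forall a' b' : T', induced_le le f b' a' ->
    forall a, f a = a' -> exists b, f b = b' /\ le b a.

Definition condU (T T' : finType) (le : rel T) (f : T -> T') : Prop :=
  forall a' b' : T', induced_le le f b' a' ->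
    forall b, f b = b' -> exists a, f a = a' /\ le b a.

Definition condS (T T' : finType) (le : rel T) (f : T -> T') : Prop :=
  forall a b c : T, le c b -> le b a -> f c = f a -> f b = f a.

Definition is_downset (T : finType) (le : rel T) (A : {set T}) : Prop :=
  forall a b, a \in A -> le b a -> b \in A.

Definition inQ (T : finType) (le : rel T) (A : {set T}) : Prop :=
  is_downset le A /\ A != set0.

Definition g (T T' : finType) (f : T -> T') (A : {set T}) : {set T'} := f @: A.

Definition g' (T T' : finType) (le : rel T) (f : T -> T') (A' : {set T'})
  : {set T} :=
  \bigcup_(A : {set T} | [&& [forall a, forall b, (a \in A) && le b a ==> (b \in A)],
                             A != set0 & g f A == A']) A.

From mathcomp Require Import all_boot.

(* The theorem follows from two observations.
   - If a union is taken over a family of sets that all have the same image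
     A' under f, and the family is not empty, then the union also has image
     A' (image_bigcup_constant).
   - The family defining g'(A') is not empty: for a surjective f, the full
     preimage f^-1(A') of a nonempty down-set A' of (P', <=') is a nonempty
     down-set of P whose image is exactly A' (preimset_downset,
     preimset_nonempty, image_preimset). *)

Section ImageOfUnion.

Variables (T T' : finType) (f : T -> T').

Lemma image_bigcup_constant (P : pred {set T}) (A' : {set T'}) (B : {set T}) :
  P B -> (forall A, P A -> f @: A = A') ->
  f @: (\bigcup_(A | P A) A) = A'.
Proof.
move=> PB imP; apply/setP=> y; apply/imsetP/idP.
- by case=> x /bigcupP[A PA xA] ->; rewrite -(imP A PA) imset_f.
- rewrite -{1}(imP B PB) => /imsetP[x xB ->]; exists x => //.
  by apply/bigcupP; exists B.
Qed.

Lemma image_preimset (A' : {set T'}) :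
  (forall a', exists a, f a = a') -> f @: (f @^-1: A') = A'.
Proof.
move=> surj; apply/setP=> y; apply/imsetP/idP.
- by case=> x; rewrite inE => fxA' ->.
- by move=> yA'; have [x fx] := surj y; exists x; rewrite ?inE fx.
Qed.

Lemma preimset_nonempty (A' : {set T'}) :
  (forall a', exists a, f a = a') -> A' != set0 -> f @^-1: A' != set0.
Proof.
move=> surj /set0Pn[y yA']; have [x fx] := surj y.
by apply/set0Pn; exists x; rewrite inE fx.
Qed.

End ImageOfUnion.

Lemma downsetP (T : finType) (le : rel T) (A : {set T}) :
  reflect (is_downset le A)
          [forall a, forall b, (a \in A) && le b a ==> (b \in A)].
Proof.
apply: (iffP forallP) => [dA a b aA ba | dA a].
- by have /forallP/(_ b)/implyP := dA a; apply; rewrite aA.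
- by apply/forallP=> b; apply/implyP=> /andP[aA ba]; apply: dA ba.
Qed.

Lemma preimset_downset (T T' : finType) (le : rel T) (f : T -> T')
    (A' : {set T'}) :
  is_downset (induced_le le f) A' -> is_downset le (f @^-1: A').
Proof.
move=> dA' a b; rewrite !inE => faA' ba; apply: (dA' (f a)) => //.
by apply/existsP; exists a; apply/existsP; exists b; rewrite !eqxx ba.
Qed.

Theorem lemma9 (T T' : finType) (le : rel T) (f : T -> T') :
  is_poset le -> has_bottom le -> has_top le ->
  (forall a' : T', exists a : T, f a = a') ->
  condD le f -> condU le f -> condS le f ->
  forall A' : {set T'}, inQ (induced_le le f) A' ->
  g f (g' le f A') = A'.
Proof.
move=> _ _ _ surj _ _ _ A' [dA' nA'].
rewrite /g /g'; apply: (@image_bigcup_constant _ _ f _ A' (f @^-1: A')).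
- apply/and3P; split.
  + exact/downsetP/preimset_downset.
  + exact: preimset_nonempty.
  + by rewrite /g image_preimset.
- by move=> A /and3P[_ _ /eqP].
Qed.
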